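(* Let $\mu, \nu$ be compactly supported probability measures on $\mathbb{R}$, and suppose there is a function $H_{\mu,\nu} \in L^2(\mu)$ such that $(\mu\otimes\nu)[\partial f] = \int H_{\mu,\nu} f\, d\mu$ for every polynomial $f$. Then for all polynomials $f, g$, \[ \int \bigl(L_\nu[L_\mu[f]] - H_{\mu,\nu} L_\mu[f]\bigr)\, g \, d\mu = -\int L_\mu[f]\, L_\mu[g]\, d\nu , \] so in particular the operator $L_\nu L_\mu - H_{\mu,\nu} L_\mu$ is symmetric with respect to the inner product of $L^2(\mu)$ on polynomials.
   Context: For a polynomial $f$, $(\partial f)(x,y) = \frac{f(x)-f(y)}{x-y}$ (a polynomial in two variables), $(\mu\otimes\nu)[F] = \iint F(x,y)\,d\mu(x)\,d\nu(y)$, and $L_\mu[f](x) = \int \frac{f(x)-f(y)}{x-y}\,d\mu(y)$. The function $H_{\mu,\nu}$ is called the c-free conjugate variable of the pair $(\mu,\nu)$. *)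

From HB Require Import structures.
From mathcomp Require Import all_boot all_order all_algebra.
From mathcomp Require Import all_classical all_reals all_analysis.
Set Implicit Arguments. Unset Strict Implicit. Unset Printing Implicit Defensive.
Import Order.TTheory GRing.Theory Num.Theory.
Local Open Scope classical_set_scope.
Local Open Scope ring_scope.

(* For g a polynomial
   function this is exactly the two-variable polynomial (∂g)(x,y). *)
Definition dq {R : realType} (g : R -> R) (x y : R) : R :=
  if x == y then derive1 g x else (g x - g y) / (x - y).

Definition Lop {R : realType} (mu : probability R R) (g : R -> R) (x : R) : R :=
  Rintegral mu setT (fun y => dq g x y).

Definition compactly_supported {R : realType} (mu : probability R R) : Prop :=
  exists M : R, mu [set x | M < `|x|] = 0%E.

Definition L2fun {R : realType} (mu : probability R R) (H : R -> R) : Prop :=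
  measurable_fun setT H /\ (\int[mu]_x ((H x) ^+ 2)%:E < +oo)%E.

From mathcomp Require Import all_boot all_order all_algebra.
From mathcomp Require Import all_classical all_reals all_analysis.
From mathcomp Require Import ring lra zify measurable_realfun.
Import Order.TTheory GRing.Theory Num.Theory numFieldNormedType.Exports.
Local Open Scope classical_set_scope.
Local Open Scope ring_scope.

(* For a polynomial p the difference quotient (∂p)(x, y) is a finite sum of
   monomials x^a y^b, so L_mu maps polynomials to polynomials and the iterated
   integrals of ∂F(x, y) g(x) against mu and nu may be taken in either order.
   Apply the defining identity of H to F g with F = L_mu[f]: the Leibniz rule
   ∂(F g)(x, y) = ∂F(x, y) g(x) + F(y) ∂g(x, y) splits its left-hand side into
   ∫ L_nu[F] g dmu plus ∫ F L_mu[g] dnu, which is the first identity.  Its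
   right-hand side is symmetric in f and g, whence the second. *)

Section Rintegral_sum.
Context d (T : measurableType d) (R : realType) (mu : {measure set T -> \bar R}).
Variables (D : set T) (mD : measurable D) (I : Type) (f : I -> T -> R).
Hypothesis intf : forall i, mu.-integrable D (EFin \o f i).

Lemma integrable_sumR (s : seq I) (P : pred I) :
  mu.-integrable D (EFin \o (fun x => \sum_(i <- s | P i) f i x)).
Proof.
apply: (eq_integrable mD _ _ _ (integrable_sum mD s (fun i _ => intf i))) => x _.
by rewrite /= sumEFin.
Qed.

Lemma Rintegral_sum (s : seq I) (P : pred I) :
  \int[mu]_(x in D) \sum_(i <- s | P i) f i x
  = \sum_(i <- s | P i) \int[mu]_(x in D) f i x.
Proof.
elim: s => [|i s IH].
  by under eq_Rintegral do rewrite big_nil; rewrite big_nil Rintegral_cst // mul0r.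
under eq_Rintegral do rewrite big_cons.
rewrite big_cons; case: (P i); last exact: IH.
by rewrite RintegralD // ?IH //; exact: integrable_sumR.
Qed.

End Rintegral_sum.

Section compact_support.
Context {R : realType} {mu : probability R R}.
Hypothesis csmu : compactly_supported mu.

Lemma continuous_integrable (f : R -> R) :
  continuous f -> mu.-integrable setT (EFin \o f).
Proof.
(* Up to a null set mu lives on [-M, M], where f is bounded. *)
move: csmu => [M hM] cf.
have mf : measurable_fun setT f := continuous_measurable_fun cf.
have mN : measurable [set x : R | M < `|x|].
  have := normr_measurable measurableT (@measurable_itv _ `]M, +oo[).
  rewrite setTI; congr measurable; apply/seteqP; split => x /=;
    by rewrite in_itv /= andbT.
rewrite (negligible_integrable mN measurableT _ hM); last exact/measurable_EFinP.
have -> : setT `\` [set x : R | M < `|x|] = `[-M, M]%classic.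
  apply/seteqP; split => x /=; rewrite in_itv /= -ler_norml.
    by move=> [_ /negP]; rewrite -leNgt.
  by move=> h; split => //; apply/negP; rewrite -leNgt.
apply: measurable_bounded_integrable => //.
- by rewrite (le_lt_trans (probability_le1 _ _)) ?ltry.
- exact: measurable_funS mf.
- have /compact_bounded[B [_ mrt]] :=
    continuous_compact (continuous_subspaceT cf) (@segment_compact R (-M) M).
  by exists B; split; rewrite ?num_real // => ? ? ? ?; exact: mrt.
Qed.

Lemma horner_integrable (p : {poly R}) (f : R -> R) :
  f =1 horner p -> mu.-integrable setT (EFin \o f).
Proof. by move=> /funext ->; exact/continuous_integrable/continuous_horner. Qed.

End compact_support.

Lemma L2fun_integrableM (R : realType) (mu : probability R R) (H g : R -> R) :
  L2fun mu H -> measurable_fun setT g ->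
  mu.-integrable setT (EFin \o (fun x => g x ^+ 2)) ->
  mu.-integrable setT (EFin \o (fun x => H x * g x)).
Proof.
move=> [mH H2] mg ig2.
have iH2 : mu.-integrable setT (EFin \o (fun x => H x ^+ 2)).
  apply/integrableP; split; first exact/measurable_EFinP/measurable_funX.
  rewrite (eq_integral (fun x => (H x ^+ 2)%:E)) // => x _.
  by rewrite /= ger0_norm ?sqr_ge0.
have iS := integrableD measurableT iH2 ig2.
apply: (le_integrable measurableT _ _ iS).
  by apply/measurable_EFinP; exact: measurable_funM.
move=> x _; rewrite /= lee_fin normrM.
rewrite (ger0_norm (addr_ge0 (sqr_ge0 _) (sqr_ge0 _))).
rewrite -(real_normK (num_real (H x))) -(real_normK (num_real (g x))).
have := sqr_ge0 (`|H x| - `|g x|); nra.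
Qed.

Section dqform.
Context {R : comRingType}.
Implicit Types (p : {poly R}) (a b : nat -> R).

(* (∂p)(x, y) = dqform p (x ^+ _) (y ^+ _) (lemma dq_horner); integrating in one
   variable replaces its powers by moments (lemma Rintegral_dqform). *)
Definition dqform p a b : R :=
  \sum_(i < size p) p`_i * \sum_(j < i) a (i.-1 - j)%N * b j.

Definition dqform_poly p a : {poly R} :=
  \sum_(i < size p) p`_i *: \sum_(j < i) a (i.-1 - j)%N *: 'X^j.

Lemma dqformC p a b : dqform p a b = dqform p b a.
Proof.
apply: eq_bigr => i _; congr (_ * _).
rewrite (reindex_inj rev_ord_inj); apply: eq_bigr => j _ /=; rewrite mulrC.
have lt_ji := ltn_ord j.
have -> : (i - j.+1 = i.-1 - j)%N by lia.
by have -> : (i.-1 - (i.-1 - j) = j)%N by lia.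
Qed.

Lemma dqformMl p a b c : dqform p a b * c = dqform p (fun k => a k * c) b.
Proof.
rewrite /dqform mulr_suml; apply: eq_bigr => i _; rewrite -mulrA mulr_suml.
by congr (_ * _); apply: eq_bigr => j _; rewrite mulrAC.
Qed.

Lemma horner_dqform_poly p a x :
  (dqform_poly p a).[x] = dqform p a (fun j => x ^+ j).
Proof.
rewrite horner_sum; apply: eq_bigr => i _; rewrite hornerZ horner_sum.
by congr (_ * _); apply: eq_bigr => j _; rewrite hornerZ hornerXn.
Qed.

End dqform.

Section difference_quotient.
Context {R : realType}.
Implicit Types (p q : {poly R}) (x y : R).

Lemma dq_sym (g : R -> R) x y : dq g x y = dq g y x.
Proof.
rewrite /dq eq_sym; case: eqP => [->//|/eqP xy].
by rewrite -[y - x]opprB -[g y - g x]opprB invrN mulrNN.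
Qed.

Lemma dq_horner p x y :
  dq (horner p) x y = dqform p (fun k => x ^+ k) (fun j => y ^+ j).
Proof.
rewrite /dq /dqform; case: eqP => [<-|/eqP xy].
- rewrite -derivE /deriv horner_poly.
  have sum_pow i : \sum_(j < i) x ^+ (i.-1 - j) * x ^+ j = x ^+ i.-1 *+ i.
    rewrite (eq_bigr (fun _ => x ^+ i.-1)) ?sumr_const ?card_ord // => j _.
    by rewrite -exprD subnK //; have := ltn_ord j; lia.
  under [RHS]eq_bigr do rewrite sum_pow.
  case: (size p) => [|n]; first by rewrite !big_ord0.
  rewrite big_ord_recl /= mulr0n mulr0 add0r; apply: eq_bigr => i _.
  by rewrite /= mulrnAl mulrnAr.
- rewrite !horner_coef -sumrB mulr_suml; apply: eq_bigr => i _.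
  by rewrite -mulrBr subrXX [(x - y) * _]mulrC mulrA mulfK // subr_eq0.
Qed.

Lemma dq_horner_poly p x y :
  dq (horner p) x y = (dqform_poly p (fun j => y ^+ j)).[x].
Proof. by rewrite dq_horner dqformC horner_dqform_poly. Qed.

Lemma dq_hornerM p q x y :
  dq (horner (p * q)) x y = dq (horner p) x y * q.[x] + p.[y] * dq (horner q) x y.
Proof.
rewrite /dq; case: eqP => [<-|/eqP xy].
  by rewrite -!derivE derivM hornerD !hornerM mulrC.
have xy' : x - y != 0 by rewrite subr_eq0.
by rewrite !hornerM; field.
Qed.

End difference_quotient.

Section dqform_integral.
Context d (T : measurableType d) (R : realType) (mu : {measure set T -> \bar R}).
Variables (p : {poly R}) (a : T -> nat -> R) (b : nat -> R).
Hypothesis inta : forall k, mu.-integrable setT (EFin \o a^~ k).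

Let integrableZlR (c : R) (f : T -> R) : mu.-integrable setT (EFin \o f) ->
  mu.-integrable setT (EFin \o (fun x => c * f x)).
Proof.
move=> /(integrableZl measurableT c).
by apply: eq_integrable => // x _; rewrite /= EFinM.
Qed.

Let integrable_term i j :
  mu.-integrable setT (EFin \o (fun x => a x (i.-1 - j)%N * b j)).
Proof. by under [fun x => _]eq_fun do rewrite mulrC; exact: integrableZlR. Qed.

Let integrable_inner i :
  mu.-integrable setT (EFin \o (fun x => \sum_(j < i) a x (i.-1 - j)%N * b j)).
Proof. by apply: integrable_sumR => // j; exact: integrable_term. Qed.

Lemma Rintegral_dqform :
  \int[mu]_x dqform p (a x) b = dqform p (fun k => \int[mu]_x a x k) b.
Proof.
rewrite Rintegral_sum //; last by move=> i; exact: integrableZlR (integrable_inner i).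
apply: eq_bigr => i _; rewrite RintegralZl // Rintegral_sum //.
by congr (_ * _); apply: eq_bigr => j _; rewrite RintegralZr.
Qed.

End dqform_integral.

Definition Lpoly {R : realType} (mu : probability R R) (p : {poly R}) : {poly R} :=
  dqform_poly p (fun k => \int[mu]_x x ^+ k).

Section Lop_polynomial.
Context {R : realType} {mu : probability R R}.
Hypothesis csmu : compactly_supported mu.

Lemma integrable_pow k : mu.-integrable setT (EFin \o (fun x => x ^+ k)).
Proof. by apply: (horner_integrable csmu ('X^k)) => x; rewrite hornerXn. Qed.

Lemma integrable_powM (g : {poly R}) k :
  mu.-integrable setT (EFin \o (fun x => x ^+ k * g.[x])).
Proof. by apply: (horner_integrable csmu ('X^k * g)) => x; rewrite hornerM hornerXn. Qed.

Lemma Lop_horner (p : {poly R}) : Lop mu (horner p) =1 horner (Lpoly mu p).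
Proof.
move=> x; rewrite /Lop horner_dqform_poly.
under eq_Rintegral do rewrite dq_horner dqformC.
by rewrite Rintegral_dqform //; exact: integrable_pow.
Qed.

Lemma integrable_dq_horner_mulr (p g : {poly R}) y :
  mu.-integrable setT (EFin \o (fun x => dq (horner p) x y * g.[x])).
Proof.
apply: (horner_integrable csmu (dqform_poly p (fun j => y ^+ j) * g)) => x.
by rewrite hornerM dq_horner_poly.
Qed.

Lemma Rintegral_dq_horner_mulr (p g : {poly R}) y :
  \int[mu]_x (dq (horner p) x y * g.[x])
  = dqform p (fun k => \int[mu]_x (x ^+ k * g.[x])) (fun j => y ^+ j).
Proof.
under eq_Rintegral do rewrite dq_horner dqformMl.
exact/Rintegral_dqform/integrable_powM.
Qed.

Lemma Rintegral_dq_hornerM (p q : {poly R}) y :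
  \int[mu]_x dq (horner (p * q)) x y
  = \int[mu]_x (dq (horner p) x y * q.[x]) + p.[y] * Lop mu (horner q) y.
Proof.
have int_dq_q : mu.-integrable setT (EFin \o (fun x => dq (horner q) x y)).
  apply: (horner_integrable csmu (dqform_poly q (fun j => y ^+ j))) => x.
  exact: dq_horner_poly.
under eq_Rintegral do rewrite dq_hornerM.
rewrite RintegralD //; last 2 first.
- exact: integrable_dq_horner_mulr.
- apply: (horner_integrable csmu (p.[y] *: dqform_poly q (fun j => y ^+ j))) => x.
  by rewrite hornerZ dq_horner_poly.
rewrite RintegralZl //; congr (_ + _ * _).
by apply: eq_Rintegral => x _; rewrite dq_sym.
Qed.

End Lop_polynomial.

Lemma Rintegral_dq_horner_swap (R : realType) (mu nu : probability R R)
    (p g : {poly R}) :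
  compactly_supported mu -> compactly_supported nu ->
  \int[nu]_y \int[mu]_x (dq (horner p) x y * g.[x])
  = \int[mu]_x (Lop nu (horner p) x * g.[x]).
Proof.
move=> csmu csnu.
under eq_Rintegral do rewrite Rintegral_dq_horner_mulr // dqformC.
under [RHS]eq_Rintegral do rewrite Lop_horner // horner_dqform_poly dqformC dqformMl.
rewrite Rintegral_dqform; last exact: integrable_pow.
rewrite Rintegral_dqform; last exact: integrable_powM.
exact: dqformC.
Qed.

Lemma Lop_integration_by_parts {R : realType} {mu nu : probability R R} {H : R -> R} :
  compactly_supported mu -> compactly_supported nu -> L2fun mu H ->
  (forall f : {poly R},
     Rintegral nu setT (fun y => Rintegral mu setT (fun x => dq (horner f) x y))
     = Rintegral mu setT (fun x => H x * f.[x])) ->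
  forall f g : {poly R},
    \int[mu]_x ((Lop nu (Lop mu (horner f)) x - H x * Lop mu (horner f) x) * g.[x])
    = - \int[nu]_x (Lop mu (horner f) x * Lop mu (horner g) x).
Proof.
move=> csmu csnu H2 conjH f g.
rewrite !(funext (Lop_horner csmu _)); set F := Lpoly mu f; set G := Lpoly mu g.
have := conjH (F * g).
under eq_Rintegral do rewrite Rintegral_dq_hornerM // Lop_horner //.
rewrite RintegralD //; last 2 first.
- pose c k := \int[mu]_x (x ^+ k * g.[x]).
  apply: (horner_integrable csnu (dqform_poly F c)) => y.
  by rewrite Rintegral_dq_horner_mulr // horner_dqform_poly.
- by apply: (horner_integrable csnu (F * G)) => y; rewrite hornerM.
rewrite Rintegral_dq_horner_swap // => conjHFg.
under eq_Rintegral do rewrite mulrBl -mulrA -hornerM.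
rewrite RintegralB //; first lra.
- apply: (horner_integrable csmu (Lpoly nu F * g)) => x.
  by rewrite hornerM Lop_horner.
- apply: (@L2fun_integrableM _ _ H (horner (F * g)) H2).
    exact: continuous_measurable_fun (@continuous_horner _ (F * g)).
  by apply: (horner_integrable csmu ((F * g) ^+ 2)) => x; rewrite horner_exp.
Qed.

Theorem lemma4p1 (R : realType) (mu nu : probability R R) (H : R -> R) :
  compactly_supported mu -> compactly_supported nu ->
  L2fun mu H ->
  (forall f : {poly R},
     Rintegral nu setT (fun y => Rintegral mu setT (fun x => dq (horner f) x y))
     = Rintegral mu setT (fun x => H x * f.[x])) ->
  forall f g : {poly R},
    Rintegral mu setT
      (fun x => (Lop nu (Lop mu (horner f)) x - H x * Lop mu (horner f) x) * g.[x])
    = - Rintegral nu setT (fun x => Lop mu (horner f) x * Lop mu (horner g) x)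
  /\
    Rintegral mu setT
      (fun x => (Lop nu (Lop mu (horner f)) x - H x * Lop mu (horner f) x) * g.[x])
    = Rintegral mu setT
      (fun x => f.[x] * (Lop nu (Lop mu (horner g)) x - H x * Lop mu (horner g) x)).
Proof.
move=> csmu csnu H2 conjH f g.
have ibp := Lop_integration_by_parts csmu csnu H2 conjH.
split; first exact: ibp.
rewrite ibp (eq_Rintegral _ (fun x _ => mulrC f.[x] _)) ibp.
by congr (- _); apply: eq_Rintegral => x _; rewrite mulrC.
Qed.
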